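(* There is a constant $C_2>0$, depending only on $p$, such that for every sequence $(\mathcal K_\ell)_{\ell\in\mathbb N_0}$ as below, every $L\in\mathbb N_0$, every choice of nodes $\widetilde z_{\ell,i}$ as below, every $m\in\mathbb N_0$ and every $z\in\mathcal N_L$, the set $$\mathcal Z_m(z):=\{(\ell,i):\ell\in\{0,\dots,L\},\ i\in\widetilde{\mathcal I}_\ell,\ {\rm level}_\ell(\widetilde z_{\ell,i})=m,\ z=\widetilde z_{\ell,i}\}$$ satisfies $|\mathcal Z_m(z)|\le C_2$.
   Context: Geometry: $\Omega\subset\mathbb R^2$ is a bounded simply connected Lipschitz domain with piecewise smooth boundary, $\Gamma\subseteq\partial\Omega$ is connected with Lipschitz relative boundary. Either $\Gamma=\partial\Omega$ (closed case), parametrized by a continuous, piecewise continuously differentiable $\gamma:[a,b]\to\Gamma$ with $\gamma(a)=\gamma(b)$ and $\gamma|_{[a,b)}$ bijective, or $\Gamma\subsetneq\partial\Omega$ (open case), parametrized by a bijective continuous piecewise $C^1$ map $\gamma:[a,b]\to\Gamma$; the one-sided derivatives satisfy $\gamma^{\prime_\ell}(t)\neq0$ for $t\in(a,b]$, $\gamma^{\prime_r}(t)\ne0$ for $t\in[a,b)$, and $\gamma^{\prime_\ell}(t)+c\gamma^{\prime_r}(t)\ne0$ for all $c>0$ (for $t\in[a,b]$ in the closed, $t\in(a,b)$ in the open case). Write $\gamma^{-1}:=(\gamma|_{[a,b)})^{-1}$. Set $o=0$ in the closed and $o=1$ in the open case. Fix $p\in\mathbb N$. Knot vectors: a knot vector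 $\mathcal K_\bullet$ consists of parameter nodes $a=\hat z_0<\dots<\hat z_n=b$ such that $\gamma$ is $C^1$ on each $[\hat z_{j-1},\hat z_j]$, with multiplicities $\#_\bullet\in\{1,\dots,p\}$ at interior nodes and $p+1$ at $\hat z_0,\hat z_n$; nodes $\mathcal N_\bullet=\{\gamma(\hat z_j)\}$ (multiplicities transferred), $N_\bullet=\sum_{j=1}^n\#_\bullet\hat z_j$; the mesh $\mathcal T_\bullet$ consists of the elements $\gamma([\hat z_{j-1},\hat z_j])$; $\hat\kappa_\bullet=\max\{|\gamma^{-1}(T)|/|\gamma^{-1}(T')|:T,T'\in\mathcal T_\bullet,T\cap T'\ne\emptyset\}$. The parameter knots list $\hat z_1,\dots,\hat z_n$ (closed, indices $1,\dots,N_\bullet$) resp. $\hat z_0,\dots,\hat z_n$ (open, indices $-p,\dots,N_\bullet$) increasingly with multiplicity, extended to a nondecreasing $(t_{\bullet,i})_{i\in\mathbb Z}$ with $t_{\bullet,-p}=\dots=t_{\bullet,0}=a$, $t_{\bullet,i}\to\pm\infty$, identically outside $(a,b]$ for all knot vectors. A fixed initial knot vector $\mathcal K_0$ (mesh $\mathcal T_0$) and $\hat\kappa_{\max}\ge1$ are given; $\mathbb K$ is the set of knot vectors with $\hat\kappa_\bullet\le\hat\kappa_{\max}$ obtained from $\mathcal K_0$ by dyadic bisections in the parameter domain and multiplicity increases. $\mathcal K_\circ\in\mathrm{refine}(\mathcal K_\bullet)$ means $\mathcal N_\bullet\subseteq\mathcal N_\circ$, $\#_\bullet z\le\#_\circ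 z$ for $z\in\mathcal N_\bullet$, and every $T\in\mathcal T_\circ$ lies in some $T'\in\mathcal T_\bullet$ with $|\gamma^{-1}(T')|=2^j|\gamma^{-1}(T)|$, $j\in\mathbb N_0$. $(\mathcal K_\ell)_{\ell\in\mathbb N_0}$ is a sequence in $\mathbb K$ starting with $\mathcal K_0$ and with $\mathcal K_{\ell+1}\in\mathrm{refine}(\mathcal K_\ell)$. B-splines: $\hat B_{\bullet,i,0}=\chi_{[t_{\bullet,i-1},t_{\bullet,i})}$, $\hat B_{\bullet,i,q}=\beta_{\bullet,i-1,q}\hat B_{\bullet,i,q-1}+(1-\beta_{\bullet,i,q})\hat B_{\bullet,i+1,q-1}$, $\beta_{\bullet,i,q}(t)=(t-t_{\bullet,i})/(t_{\bullet,i+q}-t_{\bullet,i})$ if $t_{\bullet,i}\neq t_{\bullet,i+q}$, else $0$. Weights/NURBS: initial weights $w_{0,i}>0$ ($i=1-p,\dots,N_0-p$, $w_{0,1-p}=w_{0,N_0-p}$), $\hat w=\sum_kw_{0,k}\hat B_{0,k,p}|_{[a,b]}$; for $\mathcal K_\bullet$, $w_{\bullet,i}$ are the unique coefficients with $\hat w=\sum_kw_{\bullet,k}\hat B_{\bullet,k,p}$ on $[a,b]$; $R_{\bullet,i,p}=(w_{\bullet,i}\hat B_{\bullet,i,p}/\hat w)\circ\gamma^{-1}$, $\bar R_{\bullet,1-p,p}=R_{\bullet,1-p,p}+R_{\bullet,N_\bullet-p,p}$, $\bar R_{\bullet,i,p}=R_{\bullet,i,p}$ otherwise. Multilevel index sets: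 $\widetilde{\mathcal N}_{0\setminus-1}=\mathcal N_0$ and, for $\ell\ge1$, $\widetilde{\mathcal N}_{\ell\setminus\ell-1}=(\mathcal N_\ell\setminus\mathcal N_{\ell-1})\cup\{z\in\mathcal N_\ell\cap\mathcal N_{\ell-1}:\#_\ell z>\#_{\ell-1}z\}$; $\widetilde{\mathcal I}_\ell=\{i\in\{1-p+o,\dots,N_\ell-p-1\}:\mathrm{supp}(\bar R_{\ell,i,p})\cap\widetilde{\mathcal N}_{\ell\setminus\ell-1}\neq\emptyset\}$. For all $\ell$ and $i\in\widetilde{\mathcal I}_\ell$ a node $\widetilde z_{\ell,i}\in\widetilde{\mathcal N}_{\ell\setminus\ell-1}\cap\mathrm{supp}(\bar R_{\ell,i,p})$ is fixed. Level: for $T\in\mathcal T_\bullet$ with ancestor $T_0\in\mathcal T_0$ ($T\subseteq T_0$), $\mathrm{gen}(T)=\log_2(|\gamma^{-1}(T_0)|/|\gamma^{-1}(T)|)\in\mathbb N_0$; for $z\in\mathcal N_\bullet$, ${\rm level}_\bullet(z)=\max\{\mathrm{gen}(T):T\in\mathcal T_\bullet,z\in T\}$. *)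

From Stdlib Require Import Relations.Relation_Operators.
From HB Require Import structures.
From mathcomp Require Import all_boot all_order all_algebra.
From mathcomp Require Import all_classical all_reals all_analysis.
Set Implicit Arguments. Unset Strict Implicit. Unset Printing Implicit Defensive.
Import Order.TTheory GRing.Theory Num.Theory.
Import numFieldNormedType.Exports.
Local Open Scope classical_set_scope.
Local Open Scope ring_scope.

Section Defs.
Variable R : realType.
Notation V := 'rV[R]_2.

Definition C1_on (f : R -> V) (c d : R) : Prop :=
  exists g : R -> V, {within [set t | c <= t <= d], continuous g} /\
    forall t, c <= t <= d ->
      (fun h => h^-1 *: (f (t + h) - f t))
        @ within [set h | h != 0 /\ c <= t + h <= d] (nbhs (0:R)) --> g t.

Definition left_deriv (f : R -> V) (t : R) (d : V) : Prop :=
  (fun h => h^-1 *: (f (t + h) - f t)) @ (0:R)^'- --> d.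
Definition right_deriv (f : R -> V) (t : R) (d : V) : Prop :=
  (fun h => h^-1 *: (f (t + h) - f t)) @ (0:R)^'+ --> d.

Definition curve_ok (closed : bool) (a b : R) (gam : R -> V) : Prop :=
  a < b /\
  {within [set t | a <= t <= b], continuous gam} /\
  (exists (k : nat) (s : nat -> R), s 0%N = a /\ s k = b /\
     (forall j, (j < k)%N -> s j < s j.+1) /\
     (forall j, (j < k)%N -> C1_on gam (s j) (s j.+1))) /\
  (if closed then gam a = gam b /\
      (forall s t, a <= s < b -> a <= t < b -> gam s = gam t -> s = t)
   else (forall s t, a <= s <= b -> a <= t <= b -> gam s = gam t -> s = t)) /\
  (forall t, a < t <= b -> exists2 d, left_deriv gam t d & d != 0) /\
  (forall t, a <= t < b -> exists2 d, right_deriv gam t d & d != 0) /\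
  (forall t, a < t < b -> forall dl dr, left_deriv gam t dl ->
       right_deriv gam t dr -> forall c : R, 0 < c -> dl + c *: dr != 0) /\
  (* closed case, t = a or t = b: left derivative at b, right derivative at a *)
  (closed -> forall dl dr, left_deriv gam b dl -> right_deriv gam a dr ->
       forall c : R, 0 < c -> dl + c *: dr != 0).

(* A knot vector is the list [:: (zhat_0, #zhat_0); ...; (zhat_n, #zhat_n)]. *)
Definition kv := seq (R * nat).
Definition kz (K : kv) (j : nat) : R := (nth (0, 0%N) K j).1.
Definition km (K : kv) (j : nat) : nat := (nth (0, 0%N) K j).2.
Definition kn (K : kv) : nat := (size K).-1.
Definition kN (K : kv) : nat := (\sum_(1 <= j < (kn K).+1) km K j)%N.

Definition kv_valid (p : nat) (a b : R) (gam : R -> V) (K : kv) : Prop :=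
  (1 < size K)%N /\ kz K 0 = a /\ kz K (kn K) = b /\
  km K 0 = p.+1 /\ km K (kn K) = p.+1 /\
  (forall j, (j < kn K)%N -> kz K j < kz K j.+1) /\
  (forall j, (0 < j < kn K)%N -> (0 < km K j <= p)%N) /\
  (forall j, (0 < j <= kn K)%N -> C1_on gam (kz K j.-1) (kz K j)).

Definition nodes (gam : R -> V) (K : kv) : set V :=
  [set y | exists2 j, (j < size K)%N & gam (kz K j) = y].
Definition nmult (gam : R -> V) (K : kv) (y : V) : nat :=
  (\max_(j < size K | gam (kz K j) == y) km K j)%N.
(* element T_j = gamma([zhat_{j-1}, zhat_j]), 1 <= j <= n *)
Definition elem (gam : R -> V) (K : kv) (j : nat) : set V :=
  gam @` [set t | kz K j.-1 <= t <= kz K j].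
Definition len (K : kv) (j : nat) : R := kz K j - kz K j.-1.

Definition kappa_le (gam : R -> V) (K : kv) (kappa : R) : Prop :=
  forall j j', (0 < j <= kn K)%N -> (0 < j' <= kn K)%N ->
    elem gam K j `&` elem gam K j' !=set0 -> len K j <= kappa * len K j'.

Definition bisect (K : kv) (j : nat) : kv :=
  take j K ++ ((kz K j.-1 + kz K j) / 2, 1%N) :: drop j K.
Definition incmult (K : kv) (j : nat) : kv :=
  set_nth (0, 0%N) K j (kz K j, (km K j).+1).
Definition kstep (p : nat) (K K' : kv) : Prop :=
  (exists2 j, (0 < j < size K)%N & K' = bisect K j) \/
  (exists2 j, (0 < j < kn K)%N & (km K j < p)%N /\ K' = incmult K j).

Definition inKK (p : nat) (a b : R) (gam : R -> V) (kappamax : R)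
    (K0 K : kv) : Prop :=
  clos_refl_trans kv (kstep p) K0 K /\ kv_valid p a b gam K /\
  kappa_le gam K kappamax.

Definition refines (gam : R -> V) (Kb Kc : kv) : Prop :=
  nodes gam Kb `<=` nodes gam Kc /\
  (forall y, nodes gam Kb y -> (nmult gam Kb y <= nmult gam Kc y)%N) /\
  (forall j, (0 < j <= kn Kc)%N -> exists j', (0 < j' <= kn Kb)%N /\
     elem gam Kc j `<=` elem gam Kb j' /\
     exists g : nat, len Kb j' = 2 ^+ g * len Kc j).

Definition knot_list (K : kv) : seq R :=
  flatten [seq nseq (km K j) (kz K j) | j <- iota 1 (kn K)].

(* t_{-p} = ... = t_0 = a, t_1..t_N the list above; the fixed extension
   t_{-p-1-k} = ext_l k, t_{N+1+k} = ext_r k. *)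
Definition knot (p : nat) (a : R) (ext_l ext_r : nat -> R) (K : kv)
    (i : int) : R :=
  if i <= - (p%:Z) - 1 then ext_l (absz (- i - p%:Z - 1)%R)
  else if i <= 0 then a
  else if i <= (kN K)%:Z then nth 0 (knot_list K) (absz i).-1
  else ext_r (absz (i - (kN K)%:Z - 1)%R).

Definition knot_ext_ok (a b : R) (ext_l ext_r : nat -> R) : Prop :=
  ext_l 0%N <= a /\ (forall k, ext_l k.+1 <= ext_l k) /\
  ext_l @ \oo --> -oo /\
  b < ext_r 0%N /\ (forall k, ext_r k <= ext_r k.+1) /\
  ext_r @ \oo --> +oo.

Definition beta (tk : int -> R) (i : int) (q : nat) (x : R) : R :=
  if tk i != tk (i + q%:Z) then (x - tk i) / (tk (i + q%:Z) - tk i) else 0.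

Fixpoint bspl (tk : int -> R) (q : nat) (i : int) (x : R) {struct q} : R :=
  match q with
  | 0%N => if (tk (i - 1) <= x) && (x < tk i) then 1 else 0
  | q'.+1 => beta tk (i - 1) q x * bspl tk q' i x
             + (1 - beta tk i q x) * bspl tk q' (i + 1) x
  end.

(* basis index 1-p+k, k = 0..N-1, runs through 1-p..N-p *)
Definition bidx (p k : nat) : int := k%:Z + 1 - p%:Z.

Definition spline (p : nat) (tk : int -> R) (N : nat) (c : int -> R) (x : R) : R :=
  \sum_(k < N) c (bidx p k) * bspl tk p (bidx p k) x.

(* Rbar-hat_{i} in the parameter domain: Rbar_{i,p} = Rbarhat_i o gamma^{-1} *)
Definition Rhat (p : nat) (tk : int -> R) (wl : int -> R) (what : R -> R)
    (i : int) (x : R) : R := wl i * bspl tk p i x / what x.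
Definition Rbarhat (p : nat) (tk : int -> R) (N : nat) (wl : int -> R)
    (what : R -> R) (i : int) (x : R) : R :=
  if i == 1 - p%:Z then Rhat p tk wl what (1 - p%:Z) x
                        + Rhat p tk wl what (N%:Z - p%:Z) x
  else Rhat p tk wl what i x.

(* support of f o gamma^{-1}, gamma^{-1} = (gamma|[a,b))^{-1} *)
Definition supp_on (a b : R) (gam : R -> V) (f : R -> R) : set V :=
  closure [set y | exists t, a <= t < b /\ gam t = y /\ f t != 0].

Definition tnodes (gam : R -> V) (Ks : nat -> kv) (l : nat) : set V :=
  match l with
  | 0%N => nodes gam (Ks 0%N)
  | l'.+1 => (nodes gam (Ks l) `\` nodes gam (Ks l')) `|`
             [set y | nodes gam (Ks l) y /\ nodes gam (Ks l') y /\
                      (nmult gam (Ks l') y < nmult gam (Ks l) y)%N]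
  end.

Definition is_gen (gam : R -> V) (K0 K : kv) (j g : nat) : Prop :=
  exists j0, (0 < j0 <= kn K0)%N /\ elem gam K j `<=` elem gam K0 j0 /\
    len K0 j0 = 2 ^+ g * len K j.
Definition level_is (gam : R -> V) (K0 K : kv) (y : V) (m : nat) : Prop :=
  (exists2 j, (0 < j <= kn K)%N & elem gam K j y /\ is_gen gam K0 K j m) /\
  (forall j g, (0 < j <= kn K)%N -> elem gam K j y -> is_gen gam K0 K j g ->
     (g <= m)%N).

Definition Itil (closed : bool) (p : nat) (a b : R) (gam : R -> V)
    (ext_l ext_r : nat -> R) (Ks : nat -> kv) (w : nat -> int -> R)
    (what : R -> R) (l : nat) (i : int) : Prop :=
  let o : int := if closed then 0 else 1 in
  let K := Ks l in
  (1 - p%:Z + o <= i <= (kN K)%:Z - p%:Z - 1) /\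
  (supp_on a b gam (Rbarhat p (knot p a ext_l ext_r K) (kN K) (w l) what i)
    `&` tnodes gam Ks l) !=set0.

Definition Zset (closed : bool) (p : nat) (a b : R) (gam : R -> V)
    (ext_l ext_r : nat -> R) (Ks : nat -> kv) (w : nat -> int -> R)
    (what : R -> R) (zt : nat -> int -> V) (L m : nat) (z : V)
    : set (nat * int) :=
  [set li | (li.1 <= L)%N /\
            Itil closed p a b gam ext_l ext_r Ks w what li.1 li.2 /\
            level_is gam (Ks 0%N) (Ks li.1) (zt li.1 li.2) m /\
            z = zt li.1 li.2].

End Defs.

From Stdlib Require Import Relations.Relation_Operators.
From HB Require Import structures.
From mathcomp Require Import all_boot all_order all_algebra.
From mathcomp Require Import all_classical all_reals all_analysis.
From mathcomp Require Import zify.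
Set Implicit Arguments. Unset Strict Implicit. Unset Printing Implicit Defensive.
Import Order.TTheory GRing.Theory Num.Theory.
Import numFieldNormedType.Exports.
Local Open Scope classical_set_scope.
Local Open Scope ring_scope.

(* A pair (l, i) of Z_m(z) makes z a new or upgraded node of K_l, so the
   multiplicity of z in K_l jumps at level l.  Multiplicities never decrease
   along the sequence and are at most p+1, hence they determine l.  Within one
   level, a parameter of z lies in the support [t_(i-1), t_(i+p)] of the
   B-spline i; as no p+2 consecutive knots coincide, two such indices differ by
   at most 2p+1 and are told apart by their residue modulo 2p+2.  One bit
   records which parameter of z (a or b, in the closed case) is used, and the
   glued index 1-p is counted on its own: |Z_m(z)| <= (p+2)(4p+5). *)

(* [knot_list K] is [expand (kz K) (km K) 1 (kn K)] by definition. *)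
Section Expand.
Variables (d : Order.disp_t) (T : porderType d) (x0 : T).
Variables (f : nat -> T) (c : nat -> nat).

Definition expand (m n : nat) : seq T :=
  flatten [seq nseq (c j) (f j) | j <- iota m n].

Definition increasing_on (m n : nat) : Prop :=
  forall j k, (m <= j)%N -> (j < k < m + n)%N -> (f j < f k)%O.

Lemma expandS m n : expand m n.+1 = nseq (c m) (f m) ++ expand m.+1 n.
Proof. by []. Qed.

Lemma size_expand m n : size (expand m n) = (\sum_(j <- iota m n) c j)%N.
Proof.
elim: n m => [|n IH] m; first by rewrite big_nil.
by rewrite expandS size_cat size_nseq IH /= big_cons.
Qed.

Lemma mem_expand m n x :
  x \in expand m n -> exists2 j, (m <= j < m + n)%N & x = f j.
Proof.
elim: n m => [|n IH] m //=.
rewrite expandS mem_cat mem_nseq => /orP[/andP[_ /eqP->]|/IH[j hj ->]].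
  by exists m => //; lia.
by exists j => //; lia.
Qed.

Lemma expand_gt_head m n x :
  increasing_on m n.+1 -> x \in expand m.+1 n -> (f m < x)%O.
Proof. by move=> incr /mem_expand[j hj ->]; apply: incr; lia. Qed.

Lemma increasing_onS m n : increasing_on m n.+1 -> increasing_on m.+1 n.
Proof. by move=> incr j k hj hk; apply: incr; lia. Qed.

Lemma expand_nth_le m n u v : increasing_on m n ->
  (u <= v < size (expand m n))%N ->
  (nth x0 (expand m n) u <= nth x0 (expand m n) v)%O.
Proof.
elim: n m u v => [|n IH] m u v incr; first by rewrite /expand /= => /andP[].
rewrite expandS !nth_cat size_cat size_nseq => /andP[huv hv].
case: ifP => hu; case: ifP => hv'; rewrite ?nth_nseq ?hu ?hv' //.
- apply/ltW/(expand_gt_head incr)/mem_nth.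
  (* [set] merges two elaborations of [size _] that lia sees as distinct *)
  by move: hv hv'; set k := size _; lia.
- lia.
- by apply: IH; [exact: increasing_onS | lia].
Qed.

Lemma expand_nth_lt m n P u v : increasing_on m n ->
  (forall j, (m <= j < m + n)%N -> (c j <= P)%N) ->
  (u + P <= v < size (expand m n))%N ->
  (nth x0 (expand m n) u < nth x0 (expand m n) v)%O.
Proof.
elim: n m u v => [|n IH] m u v incr cP; first by rewrite /expand /= => /andP[].
rewrite expandS !nth_cat size_cat size_nseq => /andP[huv hv].
have cmP : (c m <= P)%N by apply: cP; lia.
have -> : (v < c m)%N = false by lia.
case: ifP => hu.
  rewrite nth_nseq hu; apply/(expand_gt_head incr)/mem_nth.
  by move: hv; set k := size _; lia.
apply: IH; [exact: increasing_onS | move=> j hj; apply: cP; lia | lia].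
Qed.

End Expand.

Section KnotVector.
Variables (R : realType) (p : nat) (a b : R) (gam : R -> 'rV[R]_2).
Variables (ext_l ext_r : nat -> R) (K : kv R).
Local Notation tk := (knot p a ext_l ext_r K).

Lemma kN_size : kN K = size (knot_list K).
Proof.
by rewrite /kN /index_iota subSS subn0 (size_expand (kz K) (km K) 1 (kn K)).
Qed.

Lemma knotE (i : int) : - (p%:Z) <= i -> i <= (kN K)%:Z ->
  tk i = if i <= 0 then a else nth 0 (knot_list K) (absz i).-1.
Proof.
move=> hi1 hi2; rewrite /knot ifF; last by lia.
by case: ifP => // _; rewrite hi2.
Qed.

Hypothesis hK : kv_valid p a b gam K.

Lemma kz_lt j k : (j < k <= kn K)%N -> kz K j < kz K k.
Proof.
have [_ [_ [_ [_ [_ [kz_step _]]]]]] := hK.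
elim: k => [//|k IH] /andP[hjk hk].
have [hjk'|hkj|->] := ltngtP j k; [|lia|exact: kz_step].
by apply: lt_trans (IH _) (kz_step _ _); lia.
Qed.

Lemma km_bound j : (j <= kn K)%N -> (0 < km K j <= p.+1)%N.
Proof.
move=> hj; have [_ [_ [_ [km0 [kmn [_ [kmP _]]]]]]] := hK.
have [->|j0] := posnP j; first by rewrite km0 leqnn.
have [jn|nj|->] := ltngtP j (kn K).
- have /kmP : (0 < j < kn K)%N by rewrite j0 jn.
  lia.
- lia.
- by rewrite kmn leqnn.
Qed.

Lemma kz_increasing : increasing_on (kz K) 1 (kn K).
Proof. by move=> j k _ hjk; apply: kz_lt; lia. Qed.

Lemma knot_list_gt x : x \in knot_list K -> a < x.
Proof.
have [_ [<- _]] := hK.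
by case/mem_expand => j hj ->; apply: kz_lt; lia.
Qed.

Lemma knot_le (u v : int) : - (p%:Z) <= u -> u <= v -> v <= (kN K)%:Z ->
  tk u <= tk v.
Proof.
move=> hu huv hv; rewrite !knotE; try lia.
have := kN_size; case: ifP => hu0; case: ifP => hv0 //; try lia.
- case: v hv huv hv0 => [n|n] hv _ hv0 sz; last by lia.
  by apply/ltW/knot_list_gt/mem_nth; rewrite -sz; lia.
- case: u v hu huv hv hu0 hv0 => [n1|n1] [n2|n2] hu huv hv hu0 hv0 sz; try lia.
  by apply: (expand_nth_le _ kz_increasing); rewrite -sz; lia.
Qed.

Lemma knot_lt (u v : int) : 1 <= u -> u + p%:Z + 1 <= v -> v <= (kN K)%:Z ->
  tk u < tk v.
Proof.
move=> hu huv hv; rewrite !knotE ?ifF; try lia.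
have := kN_size; case: u v hu huv hv => [n1|n1] [n2|n2] hu huv hv sz; try lia.
apply: (expand_nth_lt _ kz_increasing (P := p.+1)); last by rewrite -sz; lia.
by move=> j hj; have /km_bound/andP[_ //] : (j <= kn K)%N by lia.
Qed.

Lemma knot_le_index (u v : int) : 1 <= u -> v <= (kN K)%:Z ->
  tk v <= tk u -> v <= u + p%:Z.
Proof.
move=> hu hv; apply: contraTT; rewrite -!ltNge => huv.
by apply: knot_lt; lia.
Qed.

Lemma nmult_le y : (nmult gam K y <= p.+1)%N.
Proof.
apply/bigmax_leqP => j _.
have /km_bound : (j <= kn K)%N by have := ltn_ord j; rewrite /kn; lia.
by case/andP.
Qed.

Lemma nmult_gt0 y : nodes gam K y -> (0 < nmult gam K y)%N.
Proof.
move=> [j hj <-].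
have := @leq_bigmax_cond _ (fun i : 'I_(size K) => gam (kz K i) == gam (kz K j))
  (fun i => km K i) (Ordinal hj) (eqxx _).
have /km_bound : (j <= kn K)%N by rewrite /kn; lia.
by move=> /andP[km_gt0 _] /(leq_trans km_gt0).
Qed.

End KnotVector.

Lemma nmult_eq0 (R : realType) (gam : R -> 'rV[R]_2) (K : kv R) y :
  ~ nodes gam K y -> nmult gam K y = 0%N.
Proof.
move=> Ny; apply/eqP; rewrite -leqn0; apply/bigmax_leqP => j /eqP hj.
by case: Ny; exists j.
Qed.

Lemma bspl_neq0_itv (R : realType) (tk : int -> R) (q : nat) (i : int) (x : R) :
  (forall u v, i - 1 <= u -> u <= v -> v <= i + q%:Z -> tk u <= tk v) ->
  bspl tk q i x != 0 -> tk (i - 1) <= x < tk (i + q%:Z).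
Proof.
elim: q i => [|q IH] i tk_le /=; first by rewrite addr0; case: ifP; rewrite ?eqxx.
have [bi0|bi] := eqVneq (bspl tk q i x) 0.
  rewrite bi0 mulr0 add0r => nz.
  have bi1 : bspl tk q (i + 1) x != 0 by apply: contraNneq nz => ->; rewrite mulr0.
  have tk_le' u v : i + 1 - 1 <= u -> u <= v -> v <= i + 1 + q%:Z -> tk u <= tk v.
    by move=> hu huv hv; apply: tk_le; lia.
  have /andP[lo hi] := IH (i + 1) tk_le' bi1.
  have -> : i + q.+1%:Z = i + 1 + q%:Z by lia.
  rewrite hi andbT; apply: le_trans lo; apply: tk_le; lia.
have tk_le' u v : i - 1 <= u -> u <= v -> v <= i + q%:Z -> tk u <= tk v.
  by move=> hu huv hv; apply: tk_le; lia.
have /andP[lo hi] := IH i tk_le' bi.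
by rewrite lo (lt_le_trans hi) //; apply: tk_le; lia.
Qed.

Section Support.
Variables (R : realType) (a b : R) (gam : R -> 'rV[R]_2).
Hypothesis gam_cont : {within [set t | a <= t <= b], continuous gam}.

Lemma supp_on_sub (c d : R) (f : R -> R) :
  (forall t, a <= t < b -> f t != 0 -> c <= t <= d) ->
  supp_on a b gam f `<=` gam @` [set t | a <= t <= b /\ c <= t <= d].
Proof.
move=> f_supp.
have itvE : [set t | a <= t <= b /\ c <= t <= d] = `[a, b] `&` `[c, d].
  by apply/seteqP; split=> t /=; rewrite !in_itv.
have : compact (gam @` [set t | a <= t <= b /\ c <= t <= d]).
  apply: continuous_compact; first by apply: continuous_subspaceW gam_cont => t [].
  by rewrite itvE; apply: compact_closedI; [exact: segment_compact | exact: itv_closed].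
move/(compact_closed (@norm_hausdorff _ _)).
move/closure_id => ->; apply: closureS => _ [t [/andP[ta tb] [<- ft]]].
by exists t => //; split; [rewrite ta ltW | apply: f_supp; rewrite ?ta].
Qed.

End Support.

Section Curve.
Variables (R : realType) (closed : bool) (a b : R) (gam : R -> 'rV[R]_2).
Hypothesis hC : curve_ok closed a b gam.

Lemma curve_ok_cont : {within [set t | a <= t <= b], continuous gam}.
Proof. by case: hC => _ []. Qed.

Lemma curve_ok_inj s t : a <= s < b -> a <= t < b -> gam s = gam t -> s = t.
Proof.
case: hC => _ [_ [_ [+ _]]]; case: closed => [[_ gam_inj] | gam_inj]; first exact: gam_inj.
by move=> /andP[sa sb] /andP[ta tb]; apply: gam_inj; rewrite ?sa ?ta ltW.
Qed.

Variables (p : nat) (ext_l ext_r : nat -> R) (K : kv R).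
Hypothesis hK : kv_valid p a b gam K.
Local Notation tk := (knot p a ext_l ext_r K).

Lemma supp_Rbarhat (wl : int -> R) (what : R -> R) (i : int) y :
  1 - p%:Z <= i -> i <= (kN K)%:Z - p%:Z - 1 -> i != 1 - p%:Z ->
  supp_on a b gam (Rbarhat p tk (kN K) wl what i) y ->
  exists2 s, a <= s <= b & tk (i - 1) <= s <= tk (i + p%:Z) /\ gam s = y.
Proof.
move=> i_lo i_hi i_glued.
have f_supp t : a <= t < b -> Rbarhat p tk (kN K) wl what i t != 0 ->
    tk (i - 1) <= t <= tk (i + p%:Z).
  move=> _; rewrite /Rbarhat (negbTE i_glued) /Rhat => nz.
  have nzB : bspl tk p i t != 0 by apply: contraNneq nz => ->; rewrite mulr0 mul0r.
  have tk_le u v : i - 1 <= u -> u <= v -> v <= i + p%:Z -> tk u <= tk v.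
    by move=> hu huv hv; apply: (knot_le ext_l ext_r hK); lia.
  by case/andP: (bspl_neq0_itv tk_le nzB) => -> /ltW ->.
by case/(supp_on_sub curve_ok_cont f_supp) => s [s_ab s_tk] <-; exists s.
Qed.

End Curve.

Section Multiplicity.
Variables (R : realType) (p : nat) (a b : R) (gam : R -> 'rV[R]_2).
Variables (Ks : nat -> kv R) (z : 'rV[R]_2).
Hypothesis hval : forall l, kv_valid p a b gam (Ks l).
Hypothesis href : forall l, refines gam (Ks l) (Ks l.+1).
Local Notation mult l := (nmult gam (Ks l) z).

Lemma nmult_homo : {homo (fun l => mult l) : l1 l2 / (l1 <= l2)%N}.
Proof.
apply: homo_leq => [//|y x w|l]; first exact: leq_trans.
have [zl|zl] := pselect (nodes gam (Ks l) z); first exact: (href l).2.1.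
by rewrite nmult_eq0.
Qed.

Lemma nmult_tnodes_lt l : tnodes gam Ks l.+1 z -> (mult l < mult l.+1)%N.
Proof.
case=> [[zl1 zl]|[_ [_ //]]].
by rewrite nmult_eq0 // (nmult_gt0 (hval _)).
Qed.

Lemma tnodes_nmult_inj l1 l2 :
  tnodes gam Ks l1 z -> tnodes gam Ks l2 z -> mult l1 = mult l2 -> l1 = l2.
Proof.
wlog l12 : l1 l2 / (l1 <= l2)%N.
  move=> W z1 z2 e; case: (leqP l1 l2) => [|/ltnW] l12; first exact: W.
  exact/esym/W.
move=> _; case: l2 l12 => [|l2]; first by rewrite leqn0 => /eqP.
rewrite leq_eqVlt => /orP[/eqP -> //|l12] /nmult_tnodes_lt.
by have := nmult_homo (l12 : (l1 <= l2)%N); lia.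
Qed.

End Multiplicity.

Lemma eqz_mod_small (d : nat) (i j : int) :
  (i = j %[mod d%:Z])%Z -> `|i - j| < d%:Z -> i = j.
Proof.
move/eqP; rewrite eqz_mod_dvd dvdzE => /dvdn_leq le_d lt_d.
have [/eqP|/le_d] := posnP `|i - j|%N; last by lia.
by rewrite absz_eq0 subr_eq0 => /eqP.
Qed.

Section Key.
Variables (R : realType) (p : nat) (closed : bool) (a b : R).
Variables (gam : R -> 'rV[R]_2) (ext_l ext_r : nat -> R) (Ks : nat -> kv R).
Variables (w : nat -> int -> R) (what : R -> R) (zt : nat -> int -> 'rV[R]_2).
Variable z : 'rV[R]_2.
Hypothesis hC : curve_ok closed a b gam.
Hypothesis hval : forall l, kv_valid p a b gam (Ks l).
Hypothesis href : forall l, refines gam (Ks l) (Ks l.+1).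
Local Notation tk l := (knot p a ext_l ext_r (Ks l)).
Local Notation Rbar l i := (Rbarhat p (tk l) (kN (Ks l)) (w l) what i).
Hypothesis hzt : forall l i, Itil closed p a b gam ext_l ext_r Ks w what l i ->
  tnodes gam Ks l (zt l i) /\ supp_on a b gam (Rbar l i) (zt l i).

(* In the closed case z = gam a = gam b has two parameters; gam is injective on
   [a, b), so this flag pins down which of them the support interval contains. *)
Definition hits_before_b (l : nat) (i : int) : bool :=
  `[< exists2 s, a <= s < b & tk l (i - 1) <= s <= tk l (i + p%:Z) /\ gam s = z >].

Lemma supp_Rbar_end l i :
  1 - p%:Z <= i -> i <= (kN (Ks l))%:Z - p%:Z - 1 -> i != 1 - p%:Z ->
  supp_on a b gam (Rbar l i) z -> ~~ hits_before_b l i ->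
  tk l (i - 1) <= b <= tk l (i + p%:Z).
Proof.
move=> i_lo i_hi i_glued /(supp_Rbarhat hC (hval l) i_lo i_hi i_glued).
case=> s /andP[sa sb] [s_tk gs] not_hit.
suff <- : s = b by [].
apply/eqP; rewrite eq_le sb leNgt; apply: contra not_hit => sltb.
by apply/asboolP; exists s; rewrite ?sa.
Qed.

Lemma common_anchor l i1 i2 :
  1 - p%:Z <= i1 -> i1 <= (kN (Ks l))%:Z - p%:Z - 1 -> i1 != 1 - p%:Z ->
  1 - p%:Z <= i2 -> i2 <= (kN (Ks l))%:Z - p%:Z - 1 -> i2 != 1 - p%:Z ->
  supp_on a b gam (Rbar l i1) z -> supp_on a b gam (Rbar l i2) z ->
  hits_before_b l i1 = hits_before_b l i2 ->
  exists s, tk l (i1 - 1) <= s <= tk l (i1 + p%:Z) /\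
            tk l (i2 - 1) <= s <= tk l (i2 + p%:Z).
Proof.
move=> lo1 hi1 g1 lo2 hi2 g2 supp1 supp2.
case hit1 : (hits_before_b l i1) => hit2.
  move: hit1 (esym hit2) => /asboolP[s1 s1ab [tk1 gs1]].
  move=> /asboolP[s2 s2ab [tk2 gs2]].
  have s12 : s1 = s2 by apply: (curve_ok_inj hC) => //; rewrite gs1 gs2.
  by exists s1; split; last rewrite s12.
exists b; split; apply: supp_Rbar_end => //; by rewrite ?hit1 -?hit2.
Qed.

Lemma supp_Rbar_index_inj l i1 i2 :
  1 - p%:Z <= i1 -> i1 <= (kN (Ks l))%:Z - p%:Z - 1 -> i1 != 1 - p%:Z ->
  1 - p%:Z <= i2 -> i2 <= (kN (Ks l))%:Z - p%:Z - 1 -> i2 != 1 - p%:Z ->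
  supp_on a b gam (Rbar l i1) z -> supp_on a b gam (Rbar l i2) z ->
  hits_before_b l i1 = hits_before_b l i2 ->
  (i1 = i2 %[mod (p.*2.+2)%:Z])%Z -> i1 = i2.
Proof.
move=> lo1 hi1 g1 lo2 hi2 g2 supp1 supp2 e_hit e_mod.
have [s [/andP[s1 s1'] /andP[s2 s2']]] :=
  common_anchor lo1 hi1 g1 lo2 hi2 g2 supp1 supp2 e_hit.
have le21 : i2 - 1 <= i1 + p%:Z + p%:Z.
  by apply: (knot_le_index (hval l)) (le_trans s2 s1'); lia.
have le12 : i1 - 1 <= i2 + p%:Z + p%:Z.
  by apply: (knot_le_index (hval l)) (le_trans s1 s2'); lia.
by apply: (eqz_mod_small e_mod); lia.
Qed.

Definition zkey (li : nat * int) : 'I_p.+2 * option (bool * 'I_p.*2.+2) :=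
  (inord (nmult gam (Ks li.1) z),
   if li.2 == 1 - p%:Z then None
   else Some (hits_before_b li.1 li.2, inord `|(li.2 %% (p.*2.+2)%:Z)%Z|%N)).

Lemma Itil_range l i : Itil closed p a b gam ext_l ext_r Ks w what l i ->
  1 - p%:Z <= i <= (kN (Ks l))%:Z - p%:Z - 1.
Proof. by case=> /andP[lo hi] _; rewrite hi andbT; case: closed lo => /=; lia. Qed.

Lemma zkey_inj L m :
  {in Zset closed p a b gam ext_l ext_r Ks w what zt L m z &, injective zkey}.
Proof.
move=> [l1 i1] [l2 i2] /set_mem[/= _ [I1 [_ z1]]] /set_mem[/= _ [I2 [_ z2]]].
rewrite /zkey /= => /pair_equal_spec[/(congr1 (@nat_of_ord _)) + e_idx].
have mult_lt l : (nmult gam (Ks l) z < p.+2)%N by rewrite ltnS (nmult_le (hval l)).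
rewrite !inordK // => e_mult.
have [tn1 supp1] := hzt I1; have [tn2 supp2] := hzt I2.
rewrite -z1 in tn1 supp1; rewrite -z2 in tn2 supp2.
have l12 := tnodes_nmult_inj hval href tn1 tn2 e_mult; subst l2.
have /andP[lo1 hi1] := Itil_range I1; have /andP[lo2 hi2] := Itil_range I2.
congr (_, _); move: e_idx.
case: eqP => [->|/eqP g1]; case: eqP => [->|/eqP g2] //=.
have d_neq0 : (p.*2.+2)%:Z != 0 by [].
have mod_lt i : (`|(i %% (p.*2.+2)%:Z)%Z|%N < p.*2.+2)%N.
  by have := ltz_pmod i (isT : 0 < (p.*2.+2)%:Z); have := modz_ge0 i d_neq0; lia.
case=> e_hit /(congr1 (@nat_of_ord _)); rewrite !inordK // => e_mod.
apply: (supp_Rbar_index_inj lo1 hi1 g1 lo2 hi2 g2 supp1 supp2 e_hit).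
by have := modz_ge0 i1 d_neq0; have := modz_ge0 i2 d_neq0; lia.
Qed.

End Key.

Local Open Scope card_scope.

Theorem lemma4p3 :
  forall p : nat, (0 < p)%N ->
  exists C2 : nat, (0 < C2)%N /\
  forall (R : realType) (closed : bool) (a b : R) (gam : R -> 'rV[R]_2)
    (ext_l ext_r : nat -> R) (K0 : kv R) (kappamax : R) (w0 : int -> R)
    (Ks : nat -> kv R) (w : nat -> int -> R) (zt : nat -> int -> 'rV[R]_2)
    (L m : nat) (z : 'rV[R]_2),
  (* geometry *)
  curve_ok closed a b gam ->
  (* fixed extension of the knots outside (a,b] *)
  knot_ext_ok a b ext_l ext_r ->
  (* initial knot vector, kappa_max >= 1 *)
  kv_valid p a b gam K0 -> 1 <= kappamax ->
  (* initial weights *)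
  (forall k, (k < kN K0)%N -> 0 < w0 (bidx p k)) ->
  w0 (1 - p%:Z) = w0 ((kN K0)%:Z - p%:Z) ->
  (* the sequence (K_l) in KK with K_{l+1} in refine(K_l) *)
  Ks 0%N = K0 ->
  (forall l, inKK p a b gam kappamax K0 (Ks l)) ->
  (forall l, refines gam (Ks l) (Ks l.+1)) ->
  (* w_{l,i}: coefficients of what = sum_k w_{0,k} Bhat_{0,k,p} w.r.t. K_l *)
  (forall l x, a <= x <= b ->
     spline p (knot p a ext_l ext_r K0) (kN K0) w0 x =
     spline p (knot p a ext_l ext_r (Ks l)) (kN (Ks l)) (w l) x) ->
  (* the fixed choice of nodes tilde z_{l,i} *)
  (forall l i,
     Itil closed p a b gam ext_l ext_r Ks w
       (spline p (knot p a ext_l ext_r K0) (kN K0) w0) l i ->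
     tnodes gam Ks l (zt l i) /\
     supp_on a b gam
       (Rbarhat p (knot p a ext_l ext_r (Ks l)) (kN (Ks l)) (w l)
          (spline p (knot p a ext_l ext_r K0) (kN K0) w0) i) (zt l i)) ->
  (* z in N_L *)
  nodes gam (Ks L) z ->
  Zset closed p a b gam ext_l ext_r Ks w
    (spline p (knot p a ext_l ext_r K0) (kN K0) w0) zt L m z
    #<= [set: 'I_C2].
Proof.
move=> p _.
exists #|{: 'I_p.+2 * option (bool * 'I_p.*2.+2)}|; split.
  by apply/card_gt0P; exists (ord0, None).
move=> R closed a b gam ext_l ext_r K0 kappamax w0 Ks w zt L m z hC _ _ _ _ _ _
  hKK href _ hzt _.
have hval l : kv_valid p a b gam (Ks l) by case: (hKK l) => _ [].
rewrite -(card_le_eqr card_II); apply/pcard_leP/injfunPex.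
exists (fun li => val (enum_rank (zkey p a b gam ext_l ext_r Ks z li))).
  by move=> li _; exact: ltn_ord.
move=> li1 li2 Z1 Z2 /val_inj/enum_rank_inj.
exact: (zkey_inj hC hval href hzt Z1 Z2).
Qed.
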